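(* Let $\mathcal N$ be a smooth manifold, $\gamma$ a symmetric $2$-covariant tensor field, $\boldsymbol\ell$ a one-form and $\ell^{(2)}$ a function on $\mathcal N$. Then $\{\mathcal N,\gamma,\boldsymbol\ell,\ell^{(2)}\}$ is null metric hypersurface data if and only if (i) $\mathrm{Rad}(\gamma|_p)$ is one-dimensional at every $p\in\mathcal N$, and (ii) for every $p$ and every non-zero $e_1\in\mathrm{Rad}(\gamma|_p)$, $\boldsymbol\ell|_p(e_1)\neq0$.
   Context: Metric hypersurface data: $\{\mathcal N,\gamma,\boldsymbol\ell,\ell^{(2)}\}$ such that $\boldsymbol{\mathcal A}|_p((W,a),(Z,b))=\gamma(W,Z)+a\boldsymbol\ell(Z)+b\boldsymbol\ell(W)+ab\ell^{(2)}$ on $T_p\mathcal N\times\mathbb R$ is non-degenerate for all $p$. Its inverse $\mathcal A((\boldsymbol\alpha,a),(\boldsymbol\beta,b))=P(\boldsymbol\alpha,\boldsymbol\beta)+a\,n(\boldsymbol\beta)+b\,n(\boldsymbol\alpha)+ab\,n^{(2)}$ defines $P$, a vector field $n$ and a function $n^{(2)}$; the data is null if $n^{(2)}=0$ everywhere. $\mathrm{Rad}(\gamma|_p)=\{X\in T_p\mathcal N:\gamma|_p(X,\cdot)=0\}$. *)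

From HB Require Import structures.
From mathcomp Require Import all_boot all_order all_algebra.
Set Implicit Arguments. Unset Strict Implicit. Unset Printing Implicit Defensive.
Import Order.TTheory GRing.Theory Num.Theory.
Local Open Scope ring_scope.

(* Tangent vectors at a point of an n-dimensional manifold are row vectors
   'rV[R]_n (coordinates in a basis of T_pN).  gamma|_p is the Gram matrix g,
   so gamma(W,Z) = W *m g *m Z^T; ell|_p is the column l, so ell(Z) = (Z *m l) 0 0;
   ell2|_p is the scalar l2. *)

(* Gram matrix of the bilinear form bold-A|_p on T_pN x R:
   [W a] *m Amx g l l2 *m [Z b]^T
     = gamma(W,Z) + a ell(Z) + b ell(W) + a b ell2. *)
Definition Amx (R : pzRingType) (n : nat) (g : 'M[R]_n) (l : 'cV[R]_n) (l2 : R)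
  : 'M[R]_(n + 1) := block_mx g l l^T l2%:M.

(* n^(2): the (R,R) component of the inverse form A = (bold-A)^{-1}. *)
Definition n2_of (R : fieldType) (n : nat) (g : 'M[R]_n) (l : 'cV[R]_n) (l2 : R) : R :=
  (invmx (Amx g l l2)) (rshift n (ord0 : 'I_1)) (rshift n (ord0 : 'I_1)).

Definition metric_hypersurface_data (R : fieldType) (P : Type) (n : nat)
  (gamma : P -> 'M[R]_n) (ell : P -> 'cV[R]_n) (ell2 : P -> R) : Prop :=
  forall p, Amx (gamma p) (ell p) (ell2 p) \in unitmx.

Definition null_metric_hypersurface_data (R : fieldType) (P : Type) (n : nat)
  (gamma : P -> 'M[R]_n) (ell : P -> 'cV[R]_n) (ell2 : P -> R) : Prop :=
  metric_hypersurface_data gamma ell ell2 /\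
  forall p, n2_of (gamma p) (ell p) (ell2 p) = 0.

(* Rad(gamma|_p) is the row space of kermx (gamma p) = {X | X *m gamma p = 0}. *)

From HB Require Import structures.
From mathcomp Require Import all_boot all_order all_algebra.
From mathcomp Require Import zify.
Set Implicit Arguments. Unset Strict Implicit. Unset Printing Implicit Defensive.
Import Order.TTheory GRing.Theory Num.Theory.
Local Open Scope ring_scope.

(* Let A be the Gram matrix of bold-A.  If A is invertible, a radical vector
   e with ell(e) = 0 would give the kernel vector (e, 0) of A, so ell is
   transverse to Rad(gamma), which therefore meets the hyperplane ker ell
   trivially and has dimension at most 1.  The last row (x, n2) of A^-1
   satisfies (x, n2) A = (0, 1); when n2 = 0 this says that x is a radical
   vector with ell(x) = 1, so the radical is a line.  Conversely, for e
   spanning Rad(gamma), (e, 0) A = ell(e) (0, 1) forces (e, 0) = ell(e) (x, n2),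
   whence n2 = 0; and pairing a kernel vector (x, a) of A with e (using the
   symmetry of gamma) gives a ell(e) = 0, so a = 0 and x lies in
   Rad(gamma) ∩ ker ell = 0. *)

Lemma rank_kermx_le_cap (R : fieldType) (n k : nat) (g : 'M[R]_n) (l : 'M[R]_(n, k)) :
  (\rank (kermx g) <= \rank (kermx g :&: kermx l)%MS + \rank l)%N.
Proof.
have := mxrank_sum_cap (kermx g) (kermx l).
have := rank_leq_col (kermx g + kermx l)%MS.
have := mxrank_ker l; have := rank_leq_row l.
lia.
Qed.

Lemma mx11_mulE (R : pzRingType) (a b : 'M[R]_1) : (a *m b) 0 0 = a 0 0 * b 0 0.
Proof. by rewrite [a]mx11_scalar mul_scalar_mx !mxE eqxx mulr1n. Qed.

Section Radical.
Variables (R : fieldType) (n : nat) (g : 'M[R]_n).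

Definition radical_transverse (l : 'cV[R]_n) :=
  forall e : 'rV[R]_n, e *m g = 0 -> e != 0 -> (e *m l) 0 0 != 0.

Lemma radical_transverse_eq0 l (x : 'rV[R]_n) :
  radical_transverse l -> x *m g = 0 -> x *m l = 0 -> x = 0.
Proof.
move=> tr xg xl; case: (eqVneq x 0) => // /(tr x xg).
by rewrite xl mxE eqxx.
Qed.

Lemma rank_kermx_eq1 l (e : 'rV[R]_n) :
  radical_transverse l -> e *m g = 0 -> e != 0 -> \rank (kermx g) = 1%N.
Proof.
move=> tr eg e0.
have cap0 : \rank (kermx g :&: kermx l)%MS = 0%N.
  apply/eqP; rewrite mxrank_eq0; apply/rowV0P => v.
  rewrite sub_capmx => /andP[/sub_kermxP vg /sub_kermxP vl].
  exact: radical_transverse_eq0 tr vg vl.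
have /mxrankS : (e <= kermx g)%MS by apply/sub_kermxP.
rewrite rank_rV e0.
have := rank_kermx_le_cap g l; have := rank_leq_col l.
lia.
Qed.

Lemma rank_kermx_gt0_radical :
  (0 < \rank (kermx g))%N -> exists2 e : 'rV[R]_n, e *m g = 0 & e != 0.
Proof.
move=> rk; have : kermx g != 0 by rewrite -mxrank_eq0 -lt0n.
by case/rowV0Pn=> e /sub_kermxP eg e0; exists e.
Qed.

End Radical.

Section MetricData.
Variables (R : fieldType) (n : nat) (g : 'M[R]_n) (l : 'cV[R]_n) (l2 : R).
Local Notation A := (Amx g l l2).

Lemma mul_row_Amx (x : 'rV[R]_n) (a : 'rV[R]_1) :
  row_mx x a *m A = row_mx (x *m g + a *m l^T) (x *m l + a *m l2%:M).
Proof. by rewrite mul_row_block. Qed.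

Lemma n2_ofE : n2_of g l l2 = drsubmx (invmx A) 0 0.
Proof. by rewrite /n2_of !mxE. Qed.

Section NonDegenerate.
Hypothesis A_unit : A \in unitmx.

Lemma Amx_unit_radical_transverse : radical_transverse g l.
Proof.
move=> e eg; apply: contraNneq => el0.
have : row_mx e 0 *m A = 0.
  by rewrite mul_row_Amx eg [e *m l]mx11_scalar el0 raddf0 !mul0mx !addr0 row_mx0.
move/eqP; rewrite mulmx_free_eq0 ?row_free_unit // row_mx_eq0.
by case/andP.
Qed.

Lemma mul_dsub_invmx_Amx : dsubmx (invmx A) *m A = row_mx 0 1%:M.
Proof.
by rewrite mul_dsub_mx mulVmx // scalar_mx_block /block_mx col_mxKd.
Qed.

Lemma radical_ell_mul_n2 (e : 'rV[R]_n) :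
  e *m g = 0 -> (e *m l) 0 0 * n2_of g l l2 = 0.
Proof.
move=> eg; have A_free : row_free A by rewrite row_free_unit.
have : row_mx e 0 = (e *m l) *m dsubmx (invmx A).
  apply: (row_free_inj A_free) => /=.
  rewrite -mulmxA mul_dsub_invmx_Amx mul_mx_row mulmx0 mulmx1.
  by rewrite mul_row_Amx eg !mul0mx !addr0.
move/(congr1 rsubmx); rewrite row_mxKr -mulmx_rsub.
move/(congr1 (fun M : 'M_1 => M 0 0)).
by rewrite mx11_mulE n2_ofE mxE => <-.
Qed.

Lemma n2_eq0_radical :
  n2_of g l l2 = 0 -> exists2 x : 'rV[R]_n, x *m g = 0 & x *m l = 1%:M.
Proof.
move=> n20; have := mul_dsub_invmx_Amx.
rewrite -[dsubmx _]hsubmxK [rsubmx _]mx11_scalar -n2_ofE n20 raddf0 mul_row_Amx.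
by rewrite !mul0mx !addr0 => /eq_row_mx[xg xl]; exists (lsubmx (dsubmx (invmx A))).
Qed.

End NonDegenerate.

Lemma Amx_unit_of_radical (e : 'rV[R]_n) :
  g^T = g -> e *m g = 0 -> radical_transverse g l -> e != 0 -> A \in unitmx.
Proof.
move=> gsym eg tr e0; rewrite -row_free_unit; apply: inj_row_free => w.
rewrite -[w]hsubmxK mul_row_Amx => /eqP; rewrite row_mx_eq0 => /andP[/eqP wg /eqP wl].
set x := lsubmx w in wg wl *; set a := rsubmx w in wg wl *.
have a0 : a = 0.
  have := congr1 (mulmx^~ e^T) wg.
  rewrite mul0mx mulmxDl -!mulmxA -{1}gsym -!trmx_mul eg trmx0 mulmx0 add0r.
  rewrite [(e *m l)^T]mx11_scalar mxE mul_mx_scalar => /eqP.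
  by rewrite scaler_eq0 (negPf (tr e eg e0)) => /eqP.
rewrite a0 !mul0mx !addr0 in wg wl.
by rewrite (radical_transverse_eq0 tr wg wl) a0 row_mx0.
Qed.

Lemma null_data_pointwise : g^T = g ->
  (A \in unitmx /\ n2_of g l l2 = 0) <->
  (\rank (kermx g) = 1%N /\ radical_transverse g l).
Proof.
move=> gsym; split=> [[U n20] | [rk tr]].
- have tr := Amx_unit_radical_transverse U.
  have [x xg xl] := n2_eq0_radical U n20.
  have x0 : x != 0 by apply: contra_eq_neq xl => ->; rewrite mul0mx eq_sym oner_neq0.
  by split; first exact: rank_kermx_eq1 tr xg x0.
- have [e eg e0] := rank_kermx_gt0_radical (eq_leq (esym rk)).
  have U := Amx_unit_of_radical gsym eg tr e0.
  split=> //; apply/eqP.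
  by have /eqP := radical_ell_mul_n2 U eg; rewrite mulf_eq0 (negPf (tr e eg e0)).
Qed.

End MetricData.

Theorem lemma3p3 (R : realFieldType) (P : Type) (n : nat)
  (gamma : P -> 'M[R]_n) (ell : P -> 'cV[R]_n) (ell2 : P -> R)
  (gamma_sym : forall p, (gamma p)^T = gamma p) :
  null_metric_hypersurface_data gamma ell ell2 <->
  ((forall p, \rank (kermx (gamma p)) = 1%N) /\
   (forall p (e1 : 'rV[R]_n), e1 *m gamma p = 0 -> e1 != 0 ->
      (e1 *m ell p) ord0 ord0 != 0)).
Proof.
have pointwise p := null_data_pointwise (ell p) (ell2 p) (gamma_sym p).
split=> [[U n20] | [rk tr]].
- by split=> p; case: ((pointwise p).1 (conj (U p) (n20 p))).
- by split=> p; case: ((pointwise p).2 (conj (rk p) (tr p))).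
Qed.
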